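(* Let $G$ be a group, $R$ a unital ring and $E$ any directed graph. Then every standard $G$-grading of the Leavitt path algebra $L_R(E)$ is virtually epsilon-strong.
   Context: A directed graph $E=(E^0,E^1,s,r)$ has vertex set $E^0$, edge set $E^1$, source and range maps $s,r\colon E^1\to E^0$. The Leavitt path algebra $L_R(E)$ is the $R$-algebra generated by symbols $v$ ($v\in E^0$), $f,f^*$ ($f\in E^1$), with $R$ commuting with the generators, subject to: $uv=\delta_{u,v}u$; $s(f)f=fr(f)=f$ and $r(f)f^*=f^*s(f)=f^*$; $f^*f'=\delta_{f,f'}r(f)$; and $\sum_{f\in E^1,s(f)=v}ff^*=v$ for every $v$ with $s^{-1}(v)$ nonempty and finite. A standard $G$-grading: assign $\deg(v)=e$ for all $v\in E^0$, choose for each $f\in E^1$ some $\deg(f)\in G$ and set $\deg(f^* )=\deg(f)^{-1}$; this grades the free $R$-algebra on these symbols, the ideal of relations is homogeneous, and $L_R(E)$ receives the quotient grading. Rings are associative, not necessarily unital. A $G$-grading $S=\bigoplus_gS_g$ is virtually epsilon-strong if $S_gS_{g^{-1}}S_g=S_g$ for all $g$ and each ring $S_gS_{g^{-1}}$ has enough idempotents: there is a set $M$ of pairwise orthogonal commuting idempotents of it such that the set $\bigvee M$ of finite joins (equivalently finite sums) of elements of $M$ is a set of local units, i.e. for each $x$ there is $f\in\bigvee M$ with $fx=xf=x$. *)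

From HB Require Import structures.
From mathcomp Require Import all_boot all_algebra.
From mathcomp Require Import monoid.
From Stdlib Require List.
Set Implicit Arguments. Unset Strict Implicit. Unset Printing Implicit Defensive.
Import GRing.Theory.
Local Open Scope ring_scope.

Record graph := Graph {
  vert : Type;
  edge : Type;
  src : edge -> vert;
  rng : edge -> vert
}.

Inductive lsym (E : graph) :=
  | SV of vert E
  | SE of edge E
  | SG of edge E.     (* ghost edge f^* *)

(* Images of the generators inside an (ambient, unital) ring A. *)
Record lpa_gen (E : graph) (A : pzRingType) := LpaGen {
  gv : vert E -> A;
  ge : edge E -> A;
  gg : edge E -> A
}.

Definition ev_sym (E : graph) (A : pzRingType) (X : lpa_gen E A) (s : lsym E) : A :=
  match s with SV v => gv X v | SE f => ge X f | SG f => gg X f end.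

Definition ev_word (E : graph) (A : pzRingType) (X : lpa_gen E A) (w : seq (lsym E)) : A :=
  \prod_(s <- w) ev_sym X s.

(* The defining relations of L_R(E), together with "R commutes with the
   generators" (phi : R -> A gives the R-algebra structure). *)
Definition lpa_rels (E : graph) (R A : pzRingType) (phi : {rmorphism R -> A})
    (X : lpa_gen E A) : Prop :=
  (forall u v : vert E, u <> v -> gv X u * gv X v = 0) /\
  (forall v : vert E, gv X v * gv X v = gv X v) /\
  (forall f : edge E, gv X (src f) * ge X f = ge X f /\ ge X f * gv X (rng f) = ge X f) /\
  (forall f : edge E, gv X (rng f) * gg X f = gg X f /\ gg X f * gv X (src f) = gg X f) /\
  (forall f f' : edge E, f <> f' -> gg X f * ge X f' = 0) /\
  (forall f : edge E, gg X f * ge X f = gv X (rng f)) /\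
  (forall (v : vert E) (l : seq (edge E)),
     l <> [::] -> List.NoDup l -> (forall f, src f = v <-> List.In f l) ->
     \sum_(f <- l) ge X f * gg X f = gv X v) /\
  (forall (r : R) (s : lsym E), phi r * ev_sym X s = ev_sym X s * phi r).

Definition lincomb (E : graph) (R A : pzRingType) (phi : {rmorphism R -> A})
    (X : lpa_gen E A) (l : seq (R * seq (lsym E))) : A :=
  \sum_(p <- l) phi p.1 * ev_word X p.2.

(* (A, phi, X) realizes the Leavitt path algebra L_R(E): the relations hold,
   and every R-linear relation among (nonempty) monomials holding in A holds in
   every R-algebra generated by elements satisfying the defining relations,
   i.e. the R-span of the nonempty monomials in A is the universal algebra
   (the free R-algebra modulo the ideal of relations). L_R(E) itself is the
   subset [lpa_elt] of the unital ring A. *)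
Definition is_LPA (E : graph) (R A : pzRingType) (phi : {rmorphism R -> A})
    (X : lpa_gen E A) : Prop :=
  lpa_rels phi X /\
  forall (B : pzRingType) (psi : {rmorphism R -> B}) (Y : lpa_gen E B),
    lpa_rels psi Y ->
    forall l : seq (R * seq (lsym E)),
      (forall p, List.In p l -> 0 < size p.2)%N ->
      lincomb phi X l = 0 -> lincomb psi Y l = 0.

Definition lpa_elt (E : graph) (R A : pzRingType) (phi : {rmorphism R -> A})
    (X : lpa_gen E A) (x : A) : Prop :=
  exists l : seq (R * seq (lsym E)),
    (forall p, List.In p l -> 0 < size p.2)%N /\ x = lincomb phi X l.

Definition deg_sym (G : groupType) (E : graph) (degE : edge E -> G) (s : lsym E) : G :=
  match s with SV _ => one | SE f => degE f | SG f => inv (degE f) end.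

Definition deg_word (G : groupType) (E : graph) (degE : edge E -> G)
    (w : seq (lsym E)) : G :=
  foldr (fun s g => mul (deg_sym degE s) g) one w.

(* The homogeneous component of degree g of the quotient grading: the image of
   the degree-g component of the free algebra, i.e. the R-linear combinations
   of nonempty monomials of degree g. *)
Definition lpa_comp (G : groupType) (E : graph) (R A : pzRingType)
    (phi : {rmorphism R -> A}) (X : lpa_gen E A) (degE : edge E -> G)
    (g : G) (x : A) : Prop :=
  exists l : seq (R * seq (lsym E)),
    (forall p, List.In p l -> 0 < size p.2 /\ deg_word degE p.2 = g)%N /\
    x = lincomb phi X l.

Definition addspan (A : pzRingType) (S : A -> Prop) (x : A) : Prop :=
  exists l : seq A, (forall y, List.In y l -> S y) /\ x = \sum_(y <- l) y.

Definition setmul (A : pzRingType) (P Q : A -> Prop) : A -> Prop :=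
  addspan (fun z => exists a b, [/\ P a, Q b & z = a * b]).

(* A ring T (a subset of A closed under the ring operations) has enough
   idempotents: a set M of pairwise orthogonal commuting idempotents of T
   whose finite joins (= finite sums of distinct elements) form a set of
   local units of T. *)
Definition enough_idempotents (A : pzRingType) (T : A -> Prop) : Prop :=
  exists M : A -> Prop,
    [/\ (forall e, M e -> T e /\ e * e = e),
        (forall e f, M e -> M f -> e * f = f * e),
        (forall e f, M e -> M f -> e <> f -> e * f = 0)
      & (forall x, T x ->
           exists l : seq A,
             [/\ uniq l, (forall e, e \in l -> M e),
                 (\sum_(e <- l) e) * x = x & x * (\sum_(e <- l) e) = x])].

Definition virtually_epsilon_strong (G : groupType) (A : pzRingType)
    (S : G -> A -> Prop) : Prop :=
  forall g : G,
    (forall x, setmul (setmul (S g) (S (inv g))) (S g) x <-> S g x) /\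
    enough_idempotents (setmul (S g) (S (inv g))).

From HB Require Import structures.
From mathcomp Require Import all_boot all_algebra.
From mathcomp Require Import monoid.
From Stdlib Require Import Classical.
Set Implicit Arguments. Unset Strict Implicit. Unset Printing Implicit Defensive.
Import GRing.Theory.
Local Open Scope ring_scope.

(* Every nonzero monomial y of L_R(E) is a product α β^* of a path and a ghost path with
   r(α) = r(β), of degree deg α (deg β)^-1; hence y = y z y with z = β α^* of the inverse
   degree, which gives S_g = S_g S_{g^-1} S_g.  For the local units of S_g S_{g^-1}, take
   the idempotents α α^* lying in S_g S_{g^-1} with α minimal for the prefix order among
   such paths.  Two distinct ones are orthogonal, since α^* α' = 0 whenever neither path
   extends the other.  If y = α β^* has degree e and lies in S_g S_{g^-1}, then so do
   α α^* = y z and β β^* = z y, so the minimal prefixes α_0 of α and β_0 of β give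
   α_0 α_0^* y = y = y β_0 β_0^*; any finite sum of the chosen idempotents containing these
   two is then a two-sided unit for y. *)

(* The relations of the Cohn path algebra: those of L_R(E) without (CK2). *)
Record cohn_family (E : graph) (A : pzRingType) (X : lpa_gen E A) : Prop :=
  CohnFamily {
    vert_orth : forall u v : vert E, u <> v -> gv X u * gv X v = 0;
    vert_idem : forall v : vert E, gv X v * gv X v = gv X v;
    src_edge : forall f : edge E, gv X (src f) * ge X f = ge X f;
    edge_rng : forall f : edge E, ge X f * gv X (rng f) = ge X f;
    rng_ghost : forall f : edge E, gv X (rng f) * gg X f = gg X f;
    ghost_src : forall f : edge E, gg X f * gv X (src f) = gg X f;
    ghost_edge_orth : forall f f' : edge E, f <> f' -> gg X f * ge X f' = 0;
    ghost_edge : forall f : edge E, gg X f * ge X f = gv X (rng f)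
  }.

Lemma lpa_rels_cohn (E : graph) (R A : pzRingType) (phi : {rmorphism R -> A})
    (X : lpa_gen E A) :
  lpa_rels phi X -> cohn_family X.
Proof.
move=> [vo [vi [se [gs [go [ck1 _]]]]]].
by split=> // f; [exact: (se f).1 | exact: (se f).2 | exact: (gs f).1 | exact: (gs f).2].
Qed.

Section AdditiveSpan.
Variable A : pzRingType.

Lemma addspan_ind (P S : A -> Prop) :
  S 0 -> (forall x y, S x -> S y -> S (x + y)) -> (forall y, P y -> S y) ->
  forall x, addspan P x -> S x.
Proof.
move=> S0 SD SP x [l [Pl ->]]; elim: l Pl => [|y l IH] Pl; first by rewrite big_nil.
by rewrite big_cons; apply: SD; [apply: SP; apply: Pl; left | apply: IH => z lz; apply: Pl; right].
Qed.

Lemma addspan0 (P : A -> Prop) : addspan P 0.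
Proof. by exists [::]; rewrite big_nil. Qed.

Lemma addspanD (P : A -> Prop) x y : addspan P x -> addspan P y -> addspan P (x + y).
Proof.
move=> [l1 [P1 ->]] [l2 [P2 ->]]; exists (l1 ++ l2); split; last by rewrite big_cat.
by move=> z zl; case: (List.in_app_or _ _ _ zl) => ?; [apply: P1 | apply: P2].
Qed.

Lemma addspan_gen (P : A -> Prop) x : P x -> addspan P x.
Proof. by move=> Px; exists [:: x]; split; [move=> z [<-|[]] | rewrite big_seq1]. Qed.

Lemma setmul_mul (P Q : A -> Prop) a b : P a -> Q b -> setmul P Q (a * b).
Proof. by move=> Pa Qb; apply: addspan_gen; exists a, b. Qed.

End AdditiveSpan.

Section LocalUnits.
Variables (A : pzRingType) (M : A -> Prop).
Hypothesis M_idem : forall e, M e -> e * e = e.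
Hypothesis M_orth : forall e f, M e -> M f -> e <> f -> e * f = 0.

(* Stronger than "some finite join of M is a two-sided unit for x", but closed under
   addition. *)
Definition large_joins_unit (x : A) : Prop :=
  exists l0 : seq A, (forall e, e \in l0 -> M e) /\
    forall l : seq A, uniq l -> (forall e, e \in l -> M e) -> {subset l0 <= l} ->
      (\sum_(e <- l) e) * x = x /\ x * (\sum_(e <- l) e) = x.

Lemma large_joins_unit0 : large_joins_unit 0.
Proof. by exists [::]; split=> // l _ _ _; rewrite mulr0 mul0r. Qed.

Lemma large_joins_unitD x y :
  large_joins_unit x -> large_joins_unit y -> large_joins_unit (x + y).
Proof.
move=> [l1 [M1 U1]] [l2 [M2 U2]]; exists (l1 ++ l2); split.
  by move=> e; rewrite mem_cat => /orP [] ?; [apply: M1 | apply: M2].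
move=> l ul Ml sl.
have s1 : {subset l1 <= l} by move=> e le; apply: sl; rewrite mem_cat le.
have s2 : {subset l2 <= l} by move=> e le; apply: sl; rewrite mem_cat le orbT.
by rewrite mulrDr mulrDl; have [-> ->] := U1 l ul Ml s1; have [-> ->] := U2 l ul Ml s2.
Qed.

Lemma join_unit_mem (l : seq A) e0 : uniq l -> (forall e, e \in l -> M e) ->
  e0 \in l -> (\sum_(e <- l) e) * e0 = e0 /\ e0 * (\sum_(e <- l) e) = e0.
Proof.
move=> ul Ml le0; have M0 := Ml e0 le0.
rewrite mulr_suml mulr_sumr !(bigD1_seq e0) //= M_idem //.
by rewrite !big1_seq ?addr0 // => e /andP [/eqP ne /Ml Me]; rewrite M_orth //; move=> ee; apply: ne.
Qed.

Lemma large_joins_unit_sandwich e1 e2 x :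
  M e1 -> M e2 -> e1 * x = x -> x * e2 = x -> large_joins_unit x.
Proof.
move=> M1 M2 ex xe; exists [:: e1; e2]; split.
  by move=> e; rewrite !inE => /orP [] /eqP ->.
move=> l ul Ml sl; split.
  by rewrite -ex mulrA (join_unit_mem ul Ml (sl _ (mem_head _ _))).1.
have le2 : e2 \in l by apply: sl; rewrite !inE eqxx orbT.
by rewrite -xe -mulrA (join_unit_mem ul Ml le2).2.
Qed.

Lemma enough_idempotents_large_joins (T : A -> Prop) :
  (forall e, M e -> T e) -> (forall x, T x -> large_joins_unit x) ->
  enough_idempotents T.
Proof.
move=> MT Tunit; exists M; split.
- by move=> e Me; split; [apply: MT | apply: M_idem].
- move=> e f Me Mf; case: (classic (e = f)) => [-> //|nef].
  by rewrite !M_orth // => efe; apply: nef.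
- exact: M_orth.
move=> x /Tunit [l0 [Ml0 U]].
have Mu e : e \in undup l0 -> M e by rewrite mem_undup; apply: Ml0.
have sl : {subset l0 <= undup l0} by move=> e; rewrite mem_undup.
by have [ex xe] := U _ (undup_uniq l0) Mu sl; exists (undup l0); split; rewrite ?undup_uniq.
Qed.

End LocalUnits.

Section Paths.
Variables (E : graph) (A : pzRingType) (X : lpa_gen E A).
Hypothesis CX : cohn_family X.

Fixpoint is_path (v : vert E) (m : seq (edge E)) : Prop :=
  if m is f :: m' then src f = v /\ is_path (rng f) m' else True.

Fixpoint path_end (v : vert E) (m : seq (edge E)) : vert E :=
  if m is f :: m' then path_end (rng f) m' else v.

Definition path_prefix (v : vert E) (m : seq (edge E)) (v' : vert E) m' : Prop :=
  v = v' /\ exists t, m' = m ++ t.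

(* For a path α = m starting at v, [path_val v m] is α and [ghost_val v m] is α^*; the
   vertex factor makes the empty path at v equal to v. *)
Definition path_val (v : vert E) m : A := gv X v * \prod_(f <- m) ge X f.
Definition ghost_val (v : vert E) m : A := \prod_(f <- rev m) gg X f * gv X v.
Definition path_proj (v : vert E) m : A := path_val v m * ghost_val v m.

Lemma path_end_cat v m t : path_end v (m ++ t) = path_end (path_end v m) t.
Proof. by elim: m v => [|f m IH] v //=. Qed.

Lemma is_path_cat v m t : is_path v (m ++ t) <-> is_path v m /\ is_path (path_end v m) t.
Proof. by elim: m v => [|f m IH] v /=; [tauto | rewrite IH; tauto]. Qed.

Lemma path_val_cat v m t : path_val v (m ++ t) = path_val v m * \prod_(f <- t) ge X f.
Proof. by rewrite /path_val big_cat mulrA. Qed.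

Lemma ghost_val_cat v m t : ghost_val v (m ++ t) = \prod_(f <- rev t) gg X f * ghost_val v m.
Proof. by rewrite /ghost_val rev_cat big_cat !mulrA. Qed.

Lemma path_val_nil v : path_val v [::] = gv X v.
Proof. by rewrite /path_val big_nil mulr1. Qed.

Lemma ghost_val_nil v : ghost_val v [::] = gv X v.
Proof. by rewrite /ghost_val big_nil mul1r. Qed.

Lemma vert_path_val v m : gv X v * path_val v m = path_val v m.
Proof. by rewrite /path_val mulrA vert_idem. Qed.

Lemma vert_path_val_neq w v m : w <> v -> gv X w * path_val v m = 0.
Proof. by move=> nwv; rewrite /path_val mulrA vert_orth // mul0r. Qed.

Lemma edge_path_val_neq f v m : rng f <> v -> ge X f * path_val v m = 0.
Proof. by move=> nfv; rewrite -(edge_rng CX) -mulrA vert_path_val_neq // mulr0. Qed.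

Lemma ghost_vert_neq f v : src f <> v -> gg X f * gv X v = 0.
Proof. by move=> nfv; rewrite -(ghost_src CX) -mulrA vert_orth // mulr0. Qed.

Lemma path_val_cons v f m :
  src f = v -> path_val v (f :: m) = ge X f * path_val (rng f) m.
Proof.
by move=> <-; rewrite /path_val big_cons mulrA src_edge // -{1}(edge_rng CX) mulrA.
Qed.

Lemma ghost_val_cons v f m :
  src f = v -> ghost_val v (f :: m) = ghost_val (rng f) m * gg X f.
Proof.
by move=> <-; rewrite /ghost_val rev_cons big_rcons -!mulrA ghost_src // rng_ghost.
Qed.

Lemma ghost_path_val_vert_neq v m v' m' :
  v <> v' -> ghost_val v m * path_val v' m' = 0.
Proof.
by move=> nv; rewrite /ghost_val /path_val mulrA -(mulrA _ (gv X v)) vert_orth // mulr0 mul0r.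
Qed.

Lemma ghost_path_val v m : is_path v m -> ghost_val v m * path_val v m = gv X (path_end v m).
Proof.
elim: m v => [|f m IH] v /=; first by rewrite ghost_val_nil path_val_nil vert_idem.
move=> [sf pm]; rewrite ghost_val_cons // path_val_cons // mulrA -(mulrA _ (gg X f)).
by rewrite ghost_edge // -mulrA vert_path_val IH.
Qed.

Lemma path_val_end v m : is_path v m -> path_val v m * gv X (path_end v m) = path_val v m.
Proof.
elim: m v => [|f m IH] v /=; first by rewrite /path_val big_nil mulr1 vert_idem.
by move=> [sf pm]; rewrite path_val_cons // -mulrA IH.
Qed.

Lemma end_ghost_val v m : is_path v m -> gv X (path_end v m) * ghost_val v m = ghost_val v m.
Proof.
elim: m v => [|f m IH] v /=; first by rewrite /ghost_val big_nil mul1r vert_idem.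
by move=> [sf pm]; rewrite ghost_val_cons // mulrA IH.
Qed.

Lemma ghost_path_val_orth v m v' m' : is_path v m -> is_path v' m' ->
  ~ path_prefix v m v' m' -> ~ path_prefix v' m' v m -> ghost_val v m * path_val v' m' = 0.
Proof.
elim: m v v' m' => [|f m IH] v v' m' pm pm' npre npre'.
  by apply: ghost_path_val_vert_neq => vv; apply: npre; split => //; exists m'.
case: m' pm' npre npre' => [|f' m'] pm' npre npre'.
  by apply: ghost_path_val_vert_neq => vv; apply: npre'; split => //; exists (f :: m).
case: (classic (v = v')) => [ev|nv]; last exact: ghost_path_val_vert_neq.
move: pm pm' => [sf pm] [sf' pm']; subst v'.
rewrite ghost_val_cons // path_val_cons // mulrA -(mulrA _ (gg X f)).
case: (classic (f = f')) => [ef|nf]; last by rewrite ghost_edge_orth // mulr0 mul0r.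
subst f'.
rewrite ghost_edge // -mulrA vert_path_val IH // => [[_ [t et]]|[_ [t et]]].
- by apply: npre; split => //; exists t; rewrite et.
- by apply: npre'; split => //; exists t; rewrite et.
Qed.

Lemma path_proj_idem v m : is_path v m -> path_proj v m * path_proj v m = path_proj v m.
Proof.
by move=> pm; rewrite /path_proj mulrA -(mulrA _ (ghost_val v m)) ghost_path_val // path_val_end.
Qed.

Lemma path_proj_orth v m v' m' : is_path v m -> is_path v' m' ->
  ~ path_prefix v m v' m' -> ~ path_prefix v' m' v m -> path_proj v m * path_proj v' m' = 0.
Proof.
move=> pm pm' npre npre'.
by rewrite /path_proj mulrA -(mulrA _ (ghost_val v m)) ghost_path_val_orth // mulr0 mul0r.
Qed.

Lemma path_proj_path_val v m t :
  is_path v m -> path_proj v m * path_val v (m ++ t) = path_val v (m ++ t).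
Proof.
move=> pm; rewrite path_val_cat /path_proj mulrA -(mulrA _ (ghost_val v m)).
by rewrite ghost_path_val // path_val_end.
Qed.

Lemma ghost_val_path_proj v m t :
  is_path v m -> ghost_val v (m ++ t) * path_proj v m = ghost_val v (m ++ t).
Proof.
move=> pm; rewrite ghost_val_cat /path_proj -mulrA (mulrA (ghost_val v m)).
by rewrite ghost_path_val // end_ghost_val.
Qed.

Lemma path_mon_flip v m u n : is_path u n -> path_end v m = path_end u n -> is_path v m ->
  path_val v m * ghost_val u n * (path_val u n * ghost_val v m) = path_proj v m.
Proof.
move=> pn ends pm.
by rewrite mulrA -(mulrA _ (ghost_val u n)) ghost_path_val // -ends path_val_end.
Qed.

Lemma path_mon_regular v m u n : is_path v m -> is_path u n -> path_end v m = path_end u n ->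
  let y := path_val v m * ghost_val u n in y * (path_val u n * ghost_val v m) * y = y.
Proof.
move=> pm pn ends /=; rewrite path_mon_flip // mulrA.
by have := path_proj_path_val [::] pm; rewrite cats0 => ->.
Qed.

End Paths.

Section Words.
Variables (E : graph) (A : pzRingType) (X : lpa_gen E A).

Definition path_word (v : vert E) (m : seq (edge E)) : seq (lsym E) :=
  SV v :: map (@SE E) m.
Definition ghost_word (v : vert E) (m : seq (edge E)) : seq (lsym E) :=
  map (@SG E) (rev m) ++ [:: SV v].

Lemma ev_word_cat w1 w2 : ev_word X (w1 ++ w2) = ev_word X w1 * ev_word X w2.
Proof. by rewrite /ev_word big_cat. Qed.

Lemma ev_word_cons s w : ev_word X (s :: w) = ev_sym X s * ev_word X w.
Proof. by rewrite /ev_word big_cons. Qed.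

Lemma ev_path_word v m : ev_word X (path_word v m) = path_val X v m.
Proof. by rewrite /ev_word big_cons big_map. Qed.

Lemma ev_ghost_word v m : ev_word X (ghost_word v m) = ghost_val X v m.
Proof. by rewrite ev_word_cat /ev_word big_map big_seq1. Qed.

End Words.

Section Degrees.
Variables (G : groupType) (E : graph) (degE : edge E -> G).

Definition deg_path (m : seq (edge E)) : G := deg_word degE (map (@SE E) m).

Lemma deg_word_cat w1 w2 :
  deg_word degE (w1 ++ w2) = mul (deg_word degE w1) (deg_word degE w2).
Proof. by elim: w1 => [|s w1 IH] /=; rewrite ?mul1g // IH mulgA. Qed.

Lemma deg_path_nil : deg_path [::] = one.
Proof. by []. Qed.

Lemma deg_path_cons f m : deg_path (f :: m) = mul (degE f) (deg_path m).
Proof. by []. Qed.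

Lemma deg_path_cat m t : deg_path (m ++ t) = mul (deg_path m) (deg_path t).
Proof. by rewrite /deg_path map_cat deg_word_cat. Qed.

Lemma deg_path_word v m : deg_word degE (path_word v m) = deg_path m.
Proof. exact: mul1g. Qed.

Lemma deg_ghost_word v m : deg_word degE (ghost_word v m) = inv (deg_path m).
Proof.
rewrite deg_word_cat /= !mulg1; elim: m => [|f m IH]; first by rewrite invg1.
by rewrite rev_cons map_rcons -cats1 deg_word_cat IH /= mulg1 invgM.
Qed.

End Degrees.

Section NormalForm.
Variables (G : groupType) (E : graph) (A : pzRingType) (X : lpa_gen E A).
Variable degE : edge E -> G.
Hypothesis CX : cohn_family X.

Definition normal_form (y : A) (d : G) : Prop :=
  y = 0 \/ exists v m u n, [/\ is_path v m, is_path u n, path_end v m = path_end u n,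
    y = path_val X v m * ghost_val X u n & d = mul (deg_path degE m) (inv (deg_path degE n))].

Lemma normal_form_sym s : normal_form (ev_sym X s) (deg_sym degE s).
Proof.
right; case: s => [v|f|f] /=.
- exists v, [::], v, [::]; split => //=; last by rewrite deg_path_nil invg1 mulg1.
  by rewrite path_val_nil ghost_val_nil vert_idem.
- exists (src f), [:: f], (rng f), [::]; split => //=.
    by rewrite path_val_cons // path_val_nil ghost_val_nil -mulrA vert_idem // edge_rng.
  by rewrite deg_path_cons !deg_path_nil invg1 !mulg1.
- exists (rng f), [::], (src f), [:: f]; split => //=.
    by rewrite ghost_val_cons // path_val_nil ghost_val_nil mulrA vert_idem // rng_ghost.
  by rewrite deg_path_cons !deg_path_nil mulg1 mul1g.
Qed.

Lemma normal_form_cons s y d :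
  normal_form y d -> normal_form (ev_sym X s * y) (mul (deg_sym degE s) d).
Proof.
case=> [->|[v [m [u [n [pm pn ends -> ->]]]]]]; first by left; rewrite mulr0.
case: s => [w|f|f] /=.
- case: (classic (w = v)) => [->|nwv]; last by left; rewrite mulrA vert_path_val_neq // mul0r.
  by right; exists v, m, u, n; rewrite mulrA vert_path_val // mul1g.
- case: (classic (rng f = v)) => [efv|nfv]; last by left; rewrite mulrA edge_path_val_neq // mul0r.
  right; exists (src f), (f :: m), u, n; rewrite /= efv deg_path_cons mulgA.
  by split => //; rewrite mulrA path_val_cons // efv.
case: m pm ends => [|f' m] pm ends.
  case: (classic (src f = v)) => [sfv|nsfv]; last first.
    by left; rewrite mulrA path_val_nil ghost_vert_neq // mul0r.
  right; exists (rng f), [::], u, (rcons n f); rewrite -cats1; split => //.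
  - by apply/is_path_cat; split => //=; rewrite -ends.
  - by rewrite path_end_cat -ends.
  - by rewrite ghost_val_cat big_seq1 !path_val_nil !mulrA -sfv ghost_src // rng_ghost.
  - by rewrite deg_path_cat deg_path_cons !deg_path_nil invgM !mul1g mulg1.
move: pm => [sf' pm]; case: (classic (f = f')) => [eff'|nff']; last first.
  by left; rewrite mulrA path_val_cons // mulrA ghost_edge_orth // !mul0r.
subst f'; right; exists (rng f), m, u, n; split => //.
  by rewrite mulrA path_val_cons // mulrA ghost_edge // vert_path_val.
by rewrite deg_path_cons !mulgA mulVg mul1g.
Qed.

Lemma word_normal_form w : (0 < size w)%N -> normal_form (ev_word X w) (deg_word degE w).
Proof.
elim: w => [|s [|s' w] IH] // _.
  by rewrite /ev_word big_seq1 /= mulg1; apply: normal_form_sym.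
by rewrite ev_word_cons; apply: normal_form_cons; apply: IH.
Qed.

End NormalForm.

Section Grading.
Variables (G : groupType) (R : pzRingType) (E : graph) (A : pzRingType).
Variables (phi : {rmorphism R -> A}) (X : lpa_gen E A) (degE : edge E -> G).
Hypothesis phi_comm : forall (r : R) (s : lsym E), phi r * ev_sym X s = ev_sym X s * phi r.

Local Notation S := (lpa_comp phi X degE).

Lemma phi_comm_word r w : phi r * ev_word X w = ev_word X w * phi r.
Proof.
elim: w => [|s w IH]; first by rewrite /ev_word big_nil mulr1 mul1r.
by rewrite ev_word_cons mulrA phi_comm -mulrA IH mulrA.
Qed.

Lemma mon_mul r w r' w' :
  phi r * ev_word X w * (phi r' * ev_word X w') = phi (r * r') * ev_word X (w ++ w').
Proof.
by rewrite ev_word_cat rmorphM -mulrA (mulrA (ev_word X w)) -phi_comm_word !mulrA.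
Qed.

Lemma lincomb_mul_ind (P : A -> Prop) (la lb : seq (R * seq (lsym E))) :
  P 0 -> (forall x y, P x -> P y -> P (x + y)) ->
  (forall p q, List.In p la -> List.In q lb -> P (phi (p.1 * q.1) * ev_word X (p.2 ++ q.2))) ->
  P (lincomb phi X la * lincomb phi X lb).
Proof.
move=> P0 PD Pmon; elim: la Pmon => [|p la IHa] Pmon; first by rewrite /lincomb big_nil mul0r.
rewrite {1}/lincomb big_cons mulrDl; apply: (PD); last first.
  by apply: IHa => p' q lp lq; apply: Pmon => //; right.
clear IHa; elim: lb Pmon => [|q lb IHb] Pmon; first by rewrite /lincomb big_nil mulr0.
rewrite /lincomb big_cons mulrDr; apply: (PD); first by rewrite mon_mul; apply: Pmon; left.
by apply: IHb => p' q' lp lq; apply: Pmon => //; right.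
Qed.

Lemma lpa_comp0 g : S g 0.
Proof. by exists [::]; rewrite /lincomb big_nil. Qed.

Lemma lpa_compD g x y : S g x -> S g y -> S g (x + y).
Proof.
move=> [l1 [m1 ->]] [l2 [m2 ->]]; exists (l1 ++ l2); split; last by rewrite /lincomb big_cat.
by move=> p lp; case: (List.in_app_or _ _ _ lp) => ?; [apply: m1 | apply: m2].
Qed.

Lemma lpa_comp_mon r w : (0 < size w)%N -> S (deg_word degE w) (phi r * ev_word X w).
Proof. by move=> sw; exists [:: (r, w)]; split; [move=> p [<-|[]] | rewrite /lincomb big_seq1]. Qed.

Lemma lpa_comp_word w : (0 < size w)%N -> S (deg_word degE w) (ev_word X w).
Proof. by move=> /(lpa_comp_mon 1); rewrite rmorph1 mul1r. Qed.

Lemma lpa_compM h k a b : S h a -> S k b -> S (mul h k) (a * b).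
Proof.
move=> [la [ma ->]] [lb [mb ->]].
apply: lincomb_mul_ind; [exact: lpa_comp0 | exact: lpa_compD |].
move=> p q /ma [sp <-] /mb [sq <-]; rewrite -deg_word_cat.
by apply: lpa_comp_mon; rewrite size_cat addn_gt0 sp.
Qed.

Lemma lpa_comp_flip v m u n :
  S (inv (mul (deg_path degE m) (inv (deg_path degE n)))) (path_val X u n * ghost_val X v m).
Proof.
have := lpa_comp_word (w := path_word u n ++ ghost_word v m) isT.
rewrite ev_word_cat ev_path_word ev_ghost_word.
by rewrite deg_word_cat deg_path_word deg_ghost_word invgM invgK.
Qed.

Hypothesis CX : cohn_family X.

Lemma setmul_lpa_comp (P Q : A -> Prop) h k x :
  (forall a, P a -> S h a) -> (forall b, Q b -> S k b) -> setmul P Q x -> S (mul h k) x.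
Proof.
move=> PS QS; apply: addspan_ind; [exact: lpa_comp0 | exact: lpa_compD |].
by move=> _ [a [b [Pa Qb ->]]]; apply: lpa_compM; [apply: PS | apply: QS].
Qed.

Lemma lpa_comp_regular g x : S g x -> setmul (setmul (S g) (S (inv g))) (S g) x.
Proof.
move=> [l [ml ->]]; elim: l ml => [|p l IH] ml; first by rewrite /lincomb big_nil; apply: addspan0.
rewrite /lincomb big_cons; apply: addspanD; last by apply: IH => q lq; apply: ml; right.
have [sp dp] := ml p (or_introl erefl).
case: (word_normal_form degE CX sp) => [->|[v [m [u [n [pm pn ends ey ed]]]]]].
  by rewrite mulr0; apply: addspan0.
have reg := path_mon_regular CX pm pn ends; rewrite /= -ey in reg.
rewrite -reg !(mulrA (phi p.1)); apply: setmul_mul; last by rewrite -dp; apply: lpa_comp_word.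
apply: setmul_mul; first by rewrite -dp; apply: lpa_comp_mon.
by rewrite -dp ed; apply: lpa_comp_flip.
Qed.

Lemma lpa_comp_symmetric g x : setmul (setmul (S g) (S (inv g))) (S g) x <-> S g x.
Proof.
split=> [Hx|]; last exact: lpa_comp_regular.
have -> : g = mul (mul g (inv g)) g by rewrite mulgV mul1g.
by apply: (setmul_lpa_comp _ _ Hx) => // a; apply: setmul_lpa_comp.
Qed.

Local Notation T g := (setmul (S g) (S (inv g))).

Lemma comp_prod_mulr g c y : S one c -> T g y -> T g (y * c).
Proof.
move=> Sc; apply: (addspan_ind (S := fun y => T g (y * c))) => [|x x' ? ?|_ [a [b [Sa Sb ->]]]] /=.
- by rewrite mul0r; apply: addspan0.
- by rewrite mulrDl; apply: addspanD.
by rewrite -mulrA; apply: setmul_mul => //; rewrite -(mulg1 (inv g)); apply: lpa_compM.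
Qed.

Lemma comp_prod_mull g c y : S one c -> T g y -> T g (c * y).
Proof.
move=> Sc; apply: (addspan_ind (S := fun y => T g (c * y))) => [|x x' ? ?|_ [a [b [Sa Sb ->]]]] /=.
- by rewrite mulr0; apply: addspan0.
- by rewrite mulrDr; apply: addspanD.
by rewrite mulrA; apply: setmul_mul => //; rewrite -(mul1g g); apply: lpa_compM.
Qed.

Definition minimal_path g (v : vert E) m : Prop :=
  [/\ is_path v m, T g (path_proj X v m) &
      forall m1 t, m = m1 ++ t -> t <> [::] -> ~ T g (path_proj X v m1)].

Definition minimal_proj g (e : A) : Prop :=
  exists v m, minimal_path g v m /\ e = path_proj X v m.

Lemma minimal_path_prefix g v m v' m' : minimal_path g v m -> minimal_path g v' m' ->
  path_prefix v m v' m' -> path_proj X v m = path_proj X v' m'.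
Proof.
move=> [pm Tm _] [_ _ min'] [ev [t et]]; subst v'.
case: (classic (t = [::])) => [t0|nt]; first by rewrite et t0 cats0.
by case: (min' m t et nt Tm).
Qed.

Lemma minimal_proj_idem g e : minimal_proj g e -> e * e = e.
Proof. by move=> [v [m [[pm _ _] ->]]]; apply: path_proj_idem. Qed.

Lemma minimal_proj_orth g e e' : minimal_proj g e -> minimal_proj g e' -> e <> e' -> e * e' = 0.
Proof.
move=> [v [m [mm ->]]] [v' [m' [mm' ->]]] ne.
have [pm _ _] := mm; have [pm' _ _] := mm'.
apply: (path_proj_orth CX pm pm') => pre; apply: ne.
  exact: minimal_path_prefix mm mm' pre.
exact/esym/(minimal_path_prefix mm' mm pre).
Qed.

Lemma minimal_proj_comm g r e : minimal_proj g e -> phi r * e = e * phi r.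
Proof.
move=> [v [m [_ ->]]].
by rewrite /path_proj -ev_path_word -ev_ghost_word -ev_word_cat phi_comm_word.
Qed.

Lemma exists_minimal_prefix g v m : is_path v m -> T g (path_proj X v m) ->
  exists m0 t, m = m0 ++ t /\ minimal_path g v m0.
Proof.
elim: {m}(size m).+1 {-2}m (ltnSn (size m)) => // k IH m ltmk pm Tm.
case: (classic (exists m1 t, [/\ m = m1 ++ t, t <> [::] & T g (path_proj X v m1)])).
  move=> [m1 [t [em nt Tm1]]].
  have lt1 : (size m1 < k)%N.
    move: ltmk; rewrite em size_cat; case: t nt {em} => [//|x t] _ /=.
    by rewrite addnS ltnS; apply: leq_ltn_trans (leq_addr _ _).
  have pm1 : is_path v m1 by move: pm; rewrite em => /is_path_cat [].
  have [m0 [t0 [em1 min0]]] := IH m1 lt1 pm1 Tm1.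
  by exists m0, (t0 ++ t); rewrite em em1 catA.
move=> nomin; exists m, [::]; split; first by rewrite cats0.
by split => // m1 t em nt Tm1; apply: nomin; exists m1, t.
Qed.

Lemma mon_large_joins_unit g r w : (0 < size w)%N -> deg_word degE w = one ->
  T g (ev_word X w) -> large_joins_unit (minimal_proj g) (phi r * ev_word X w).
Proof.
move=> sw dw Tw.
case: (word_normal_form degE CX sw) => [->|[v [m [u [n [pm pn ends ey ed]]]]]].
  by rewrite mulr0; apply: large_joins_unit0.
have Sz := lpa_comp_flip v m u n; rewrite -ed dw invg1 in Sz.
have Tv : T g (path_proj X v m).
  by rewrite -(path_mon_flip CX pn ends pm) -ey; apply: comp_prod_mulr.
have Tu : T g (path_proj X u n).
  by rewrite -(path_mon_flip CX pm (esym ends) pn) -ey; apply: comp_prod_mull.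
have [m0 [t1 [em mm]]] := exists_minimal_prefix pm Tv.
have [n0 [t2 [en mn]]] := exists_minimal_prefix pn Tu.
have [[pm0 _ _] [pn0 _ _]] := (mm, mn).
have Mv : minimal_proj g (path_proj X v m0) by exists v, m0.
have Mu : minimal_proj g (path_proj X u n0) by exists u, n0.
apply: (large_joins_unit_sandwich (@minimal_proj_idem g) (@minimal_proj_orth g) Mv Mu).
  rewrite mulrA -(minimal_proj_comm r Mv) -mulrA ey em (mulrA (path_proj X v m0)).
  by rewrite path_proj_path_val.
by rewrite -mulrA ey en -mulrA ghost_val_path_proj.
Qed.

Lemma comp_prod_large_joins_unit g x : T g x -> large_joins_unit (minimal_proj g) x.
Proof.
apply: addspan_ind; [exact: large_joins_unit0 | exact: large_joins_unitD |].
move=> _ [a [b [[la [ma ->]] [lb [mb ->]] ->]]].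
apply: lincomb_mul_ind; [exact: large_joins_unit0 | exact: large_joins_unitD |].
move=> p q /ma [sp dp] /mb [sq dq]; apply: mon_large_joins_unit.
- by rewrite size_cat addn_gt0 sp.
- by rewrite deg_word_cat dp dq mulgV.
by rewrite ev_word_cat; apply: setmul_mul; [rewrite -dp | rewrite -dq]; apply: lpa_comp_word.
Qed.

Lemma comp_prod_enough_idempotents g : enough_idempotents (T g).
Proof.
apply: (enough_idempotents_large_joins (@minimal_proj_idem g) (@minimal_proj_orth g)).
  by move=> e [v [m [[_ Tm _] ->]]].
exact: comp_prod_large_joins_unit.
Qed.

End Grading.

Theorem proposition4p3 (G : groupType) (R : pzRingType) (E : graph)
    (A : pzRingType) (phi : {rmorphism R -> A}) (X : lpa_gen E A)
    (degE : edge E -> G) :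
  is_LPA phi X ->
  virtually_epsilon_strong (lpa_comp phi X degE).
Proof.
move=> [rels _] g.
have CX := lpa_rels_cohn rels.
have [_ [_ [_ [_ [_ [_ [_ phi_comm]]]]]]] := rels.
split; first exact: lpa_comp_symmetric.
exact: comp_prod_enough_idempotents.
Qed.
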